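(* Let $k_{ap}>0$, $k_{ad}>0$, $\omega_o>0$, $c_r>0$, $d\in\mathbb R$, $L_f\ge0$. Let $f:[0,\infty)\to\mathbb R$ be absolutely continuous with $|\dot f(t)|\le L_f$ for all $t\ge0$. Consider a solution on $[0,\infty)$ of the closed-loop system $$\dot x_1=x_2,\qquad \dot x_2=f(t)-\lambda(t),$$ $$\dot\xi=-\omega_o\xi-\omega_o^2x_2+\omega_o\lambda,\qquad \hat f=\xi+\omega_o x_2,$$ $$\lambda(t)=k_{ap}\big(x_1-r\big)+k_{ad}\big(x_2-\dot r\big)+\hat f(t)-\ddot r(t),$$ where $$r(t)=d+\big(x_1(0)-d\big)e^{-c_rt}+\big(x_2(0)+c_r(x_1(0)-d)\big)te^{-c_rt}.$$ Let $h$ be the impulse response of $H(s)=\frac{1}{s^2+k_{ad}s+k_{ap}}$ and $\|h\|_{L_1}=\int_0^\infty|h(\tau)|\,d\tau$. Then $$\limsup_{T\to\infty}\frac1T\int_0^T\big(x_1(t)-d\big)_+\,dt\le\|h\|_{L_1}\frac{L_f}{\omega_o},$$ where $(z)_+=\max\{z,0\}$.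
   Context: Surrogate model of Lagrangian safe RL: $x_1(t)$ models the population discounted cost return $J_c(\pi(t))$ of the current policy, $x_2$ its derivative, $\lambda$ the Lagrange multiplier, $f$ a lumped unknown disturbance, $(\xi,\hat f)$ a reduced-order extended state observer with gain $\omega_o$, $d$ the cost threshold, and $r$ a critically damped reference (solution of $\ddot r=-2c_r\dot r-c_r^2(r-d)$, $r(0)=x_1(0)$, $\dot r(0)=x_2(0)$) converging to $d$. The impulse response $h$ solves $\ddot h+k_{ad}\dot h+k_{ap}h=0$, $h(0)=0$, $\dot h(0)=1$. *)

From Stdlib Require Import Reals.
From Coquelicot Require Import Coquelicot.
Open Scope R_scope.

(* Critically damped reference r(t) with r(0) = a, r'(0) = b, converging to d. *)
Definition rref (cr d a b : R) (t : R) : R :=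
  d + (a - d) * exp (- cr * t) + (b + cr * (a - d)) * t * exp (- cr * t).

Definition fhat (wo : R) (xi x2 : R -> R) (t : R) : R := xi t + wo * x2 t.

Definition lam (kap kad wo : R) (r : R -> R) (x1 x2 xi : R -> R) (t : R) : R :=
  kap * (x1 t - r t) + kad * (x2 t - Derive r t) + fhat wo xi x2 t
  - Derive (Derive r) t.

Definition pos_part (z : R) : R := Rmax z 0.

From Stdlib Require Import Reals Lra.
From Coquelicot Require Import Coquelicot.
Open Scope R_scope.

(* The observer output obeys fhat' = wo (f - fhat): it is a first-order lag of the
   Lf-Lipschitz disturbance, so |f - fhat| is eventually at most Lf / wo.  The
   tracking error e = x1 - r solves e'' + kad e' + kap e = f - fhat with zero initial
   data, hence e = h * (f - fhat) and limsup |e| <= ||h||_1 Lf / wo.  Since r -> d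
   and (x1 - d)_+ <= |e| + |r - d|, the same bound holds for (x1 - d)_+, and Cesaro
   averaging does not increase a limsup. *)

Definition limsup_le (u : R -> R) (A : R) : Prop :=
  forall eps, 0 < eps -> Rbar_locally p_infty (fun t => u t <= A + eps).

Lemma limsup_le_const (A : R) : limsup_le (fun _ => A) A.
Proof. intros eps heps. exists 0. intros t _. lra. Qed.

Lemma limsup_le_le (u v : R -> R) (A : R) :
  Rbar_locally p_infty (fun t => u t <= v t) -> limsup_le v A -> limsup_le u A.
Proof.
  intros Huv Hv eps heps.
  generalize (filter_and _ _ Huv (Hv eps heps)).
  apply filter_imp. intros t [H1 H2]. lra.
Qed.

Lemma limsup_le_plus (u v : R -> R) (A B : R) :
  limsup_le u A -> limsup_le v B -> limsup_le (fun t => u t + v t) (A + B).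
Proof.
  intros Hu Hv eps heps.
  assert (heps2 : 0 < eps / 2) by lra.
  generalize (filter_and _ _ (Hu _ heps2) (Hv _ heps2)).
  apply filter_imp. intros t [H1 H2]. lra.
Qed.

Lemma limsup_le_of_slack (u : R -> R) (A C : R) :
  (forall eta, 0 < eta <= 1 -> Rbar_locally p_infty (fun t => u t <= A + eta * C)) ->
  limsup_le u A.
Proof.
  intros H eps heps.
  set (eta := Rmin 1 (eps / (Rabs C + 1))).
  assert (HC : 0 < Rabs C + 1) by (pose proof (Rabs_pos C); lra).
  assert (Heta : 0 < eta <= 1).
  { split; [apply Rmin_pos; [lra | apply Rdiv_lt_0_compat; lra] | apply Rmin_l]. }
  assert (Hslack : eta * C <= eps).
  { assert (eta <= eps / (Rabs C + 1)) by apply Rmin_r.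
    assert (eps / (Rabs C + 1) * (Rabs C + 1) = eps) by (field; lra).
    pose proof (Rle_abs C). pose proof (Rabs_pos C). nra. }
  generalize (H eta Heta). apply filter_imp. intros t Ht. lra.
Qed.

Lemma limsup_le_exp_decay (c M1 M2 : R) :
  0 < c -> 0 <= M1 -> 0 <= M2 -> limsup_le (fun y => exp (- c * y) * (M1 + M2 * y)) 0.
Proof.
  intros hc h1 h2 eta heta.
  assert (Hec : 0 < eta * c) by nra.
  exists (M1 / (eta * c) + 4 * M2 / (eta * c ^ 2)). intros y Hy.
  assert (HS1 : 0 <= M1 / (eta * c)) by (apply Rdiv_le_0_compat; lra).
  assert (HS2 : 0 <= 4 * M2 / (eta * c ^ 2)) by (apply Rdiv_le_0_compat; nra).
  assert (Hy0 : 0 <= c * y / 2) by nra.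
  assert (Hm1 : M1 <= eta * c * y).
  { assert (M1 = eta * c * (M1 / (eta * c))) by (field; split; lra). nra. }
  assert (Hm2 : M2 <= eta * c ^ 2 / 4 * y).
  { assert (M2 = eta * c ^ 2 / 4 * (4 * M2 / (eta * c ^ 2))) by (field; split; lra).
    assert (4 * M2 / (eta * c ^ 2) <= y) by lra. assert (0 < eta * c ^ 2 / 4) by nra. nra. }
  (* [exp (c y) = exp (c y / 2)^2 >= (1 + c y / 2)^2] dominates the affine factor *)
  assert (Hexp : (1 + c * y / 2) ^ 2 <= exp (c * y)).
  { assert (exp (c * y) = exp (c * y / 2) * exp (c * y / 2))
      by (rewrite <- exp_plus; f_equal; field).
    pose proof (exp_ineq1_le (c * y / 2)). nra. }
  assert (Hinv : exp (- c * y) * exp (c * y) = 1).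
  { rewrite <- exp_plus. replace (- c * y + c * y) with 0 by ring. apply exp_0. }
  assert (Hbig : M1 + M2 * y <= eta * exp (c * y)) by nra.
  pose proof (exp_pos (- c * y)).
  apply Rle_trans with (exp (- c * y) * (eta * exp (c * y))).
  - apply Rmult_le_compat_l; lra.
  - replace (exp (- c * y) * (eta * exp (c * y))) with (eta * (exp (- c * y) * exp (c * y)))
      by ring. rewrite Hinv. lra.
Qed.

Lemma continuous_of_Lipschitz (g : R -> R) (L : R) (x : R) :
  (forall s t, Rabs (g t - g s) <= L * Rabs (t - s)) -> continuous g x.
Proof.
  intros Hg. apply filterlim_locally. intros eps.
  assert (HL : 0 < Rabs L + 1) by (pose proof (Rabs_pos L); lra).
  assert (Hd : 0 < eps / (Rabs L + 1)) by (apply Rdiv_lt_0_compat; [apply cond_pos | lra]).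
  exists (mkposreal _ Hd). intros y Hy.
  change (Rabs (y - x) < eps / (Rabs L + 1)) in Hy. change (Rabs (g y - g x) < eps).
  assert (eps / (Rabs L + 1) * (Rabs L + 1) = eps) by (field; lra).
  pose proof (Hg x y). pose proof (Rle_abs L). pose proof (Rabs_pos (y - x)). nra.
Qed.

Lemma pos_part_Lipschitz (s t : R) : Rabs (pos_part t - pos_part s) <= 1 * Rabs (t - s).
Proof. unfold pos_part, Rmax. destruct (Rle_dec t 0), (Rle_dec s 0); split_Rabs; lra. Qed.

Lemma pos_part_id (y : R) : 0 <= y -> pos_part y = y.
Proof. apply Rmax_left. Qed.

Lemma continuous_pos_part (x : R) : continuous pos_part x.
Proof. exact (continuous_of_Lipschitz pos_part 1 x pos_part_Lipschitz). Qed.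

(* Only the values on [0, oo) matter; extending constantly to the left turns
   one-sided continuity at 0 into the two-sided continuity that the Riemann-integral
   lemmas require. *)
Definition extend_left (g : R -> R) (y : R) : R := g (pos_part y).

Lemma extend_left_id (g : R -> R) (y : R) : 0 <= y -> extend_left g y = g y.
Proof. intros hy. unfold extend_left. rewrite pos_part_id by exact hy. reflexivity. Qed.

Lemma continuous_extend_left (g : R -> R) (x : R) :
  (forall t, 0 <= t -> continuous g t) -> continuous (extend_left g) x.
Proof.
  intros hg. apply (continuous_comp pos_part g); [apply continuous_pos_part |].
  apply hg, Rmax_r.
Qed.

Lemma continuous_extend_left_Lipschitz (f : R -> R) (L : R) (x : R) : 0 <= L ->
  (forall s t, 0 <= s -> 0 <= t -> Rabs (f t - f s) <= L * Rabs (t - s)) ->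
  continuous (extend_left f) x.
Proof.
  intros hL hf. apply (continuous_of_Lipschitz _ L). intros s t.
  eapply Rle_trans; [apply hf; apply Rmax_r |].
  pose proof (pos_part_Lipschitz s t). apply Rmult_le_compat_l; lra.
Qed.

Lemma continuous_reflect (G : R -> R) (t u : R) :
  continuous G (t - u) -> continuous (fun u => G (t - u)) u.
Proof.
  intros hG. apply (continuous_comp (fun u => t - u) G); [| exact hG].
  apply (continuous_minus (fun _ => t) (fun u => u)); [apply continuous_const | apply continuous_id].
Qed.

Lemma derive_nonpos_le (phi dphi : R -> R) (a b : R) : a <= b ->
  (forall x, a <= x <= b -> is_derive phi x (dphi x)) ->
  (forall x, a <= x <= b -> dphi x <= 0) -> phi b <= phi a.
Proof.
  intros hab Hd Hneg.
  destruct (MVT_gen phi a b dphi) as [c [Hc Heq]]; rewrite Rmin_left, Rmax_right in * by lra.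
  - intros x Hx. apply Hd. lra.
  - intros x Hx. apply continuity_pt_filterlim, (ex_derive_continuous phi).
    eexists. apply Hd. lra.
  - pose proof (Hneg c Hc). nra.
Qed.

Lemma first_order_lag_signed_bound (wo L sigma : R) (f F : R -> R) :
  0 < wo -> 0 <= L -> Rabs sigma = 1 ->
  (forall s t, 0 <= s -> 0 <= t -> Rabs (f t - f s) <= L * Rabs (t - s)) ->
  (forall s, 0 <= s -> is_derive F s (wo * (f s - F s))) ->
  forall t, 0 <= t -> sigma * (F t - f t) <= L / wo + exp (- wo * t) * Rabs (f 0 - F 0).
Proof.
  intros hwo hL hsigma hf hF t ht.
  set (E := fun s => exp (- wo * (t - s))).
  (* variation of constants on [0, t]; the second term integrates the worst-case
     drift [L wo (t - s) E s] of the first one *)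
  set (phi := fun s => sigma * E s * (F s - f t) - L * ((t - s) * E s + E s / wo)).
  assert (Hmono : phi t <= phi 0).
  { apply (derive_nonpos_le phi (fun s => wo * E s * (sigma * (f s - f t) - L * (t - s))));
      [lra | |].
    - intros s Hs. unfold phi, E. auto_derive.
      + eexists. apply hF. lra.
      + rewrite (is_derive_unique (fun x : R => F x) s _ (hF s ltac:(lra))).
        change (t + - s) with (t - s). simpl. field. lra.
    - intros s Hs.
      assert (Hlip : sigma * (f s - f t) <= L * (t - s)).
      { pose proof (Rle_abs (sigma * (f s - f t))) as Habs.
        rewrite Rabs_mult, hsigma in Habs.
        pose proof (hf s t ltac:(lra) ht) as Hft.
        rewrite (Rabs_pos_eq (t - s)), Rabs_minus_sym in Hft by lra. lra. }
      assert (0 <= wo * E s) by (unfold E; pose proof (exp_pos (- wo * (t - s))); nra).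
      nra. }
  unfold phi, E in Hmono.
  rewrite Rminus_eq_0, Rminus_0_r, Rmult_0_r, exp_0 in Hmono.
  set (X := exp (- wo * t)) in *.
  assert (HX : 0 < X) by apply exp_pos.
  assert (Hf0 : Rabs (F 0 - f t) <= Rabs (f 0 - F 0) + L * t).
  { pose proof (hf 0 t ltac:(lra) ht) as Hft. rewrite Rminus_0_r, (Rabs_pos_eq t ht) in Hft.
    split_Rabs; lra. }
  assert (Hs : sigma * X * (F 0 - f t) <= X * Rabs (F 0 - f t)).
  { pose proof (Rle_abs (sigma * (F 0 - f t))) as Habs.
    rewrite Rabs_mult, hsigma in Habs. nra. }
  assert (0 <= L * X / wo) by (apply Rdiv_le_0_compat; nra).
  assert (L * (0 * 1 + 1 / wo) = L / wo) by (field; lra).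
  assert (L * (t * X + X / wo) = L * t * X + L * X / wo) by (field; lra).
  nra.
Qed.

Lemma first_order_lag_bound (wo L : R) (f F : R -> R) : 0 < wo -> 0 <= L ->
  (forall s t, 0 <= s -> 0 <= t -> Rabs (f t - f s) <= L * Rabs (t - s)) ->
  (forall s, 0 <= s -> is_derive F s (wo * (f s - F s))) ->
  forall t, 0 <= t -> Rabs (f t - F t) <= L / wo + exp (- wo * t) * Rabs (f 0 - F 0).
Proof.
  intros hwo hL hf hF t ht.
  assert (Hm : Rabs (-1) = 1) by (rewrite Rabs_left; lra).
  pose proof (first_order_lag_signed_bound wo L 1 f F hwo hL Rabs_R1 hf hF t ht).
  pose proof (first_order_lag_signed_bound wo L (-1) f F hwo hL Hm hf hF t ht).
  apply Rabs_le. lra.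
Qed.

Lemma is_RInt_impulse_response (kap kad : R) (h dh G e e1 : R -> R) :
  (forall t, is_derive h t (dh t)) ->
  (forall t, is_derive dh t (- kad * dh t - kap * h t)) -> h 0 = 0 -> dh 0 = 1 ->
  (forall x, continuous G x) ->
  (forall x, 0 <= x -> is_derive e x (e1 x)) ->
  (forall x, 0 <= x -> is_derive e1 x (G x - kap * e x - kad * e1 x)) ->
  e 0 = 0 -> e1 0 = 0 ->
  forall t, 0 <= t -> is_RInt (fun u => h u * G (t - u)) 0 t (e t).
Proof.
  intros hh hdh hh0 hdh0 hG he he1 e0 e10 t ht.
  (* since [h] solves the homogeneous equation, [phi] is an antiderivative of
     [- h u * G (t - u)], and the initial conditions give [phi t - phi 0 = - e t] *)
  set (phi := fun u => h u * e1 (t - u) + (dh u + kad * h u) * e (t - u)).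
  assert (Hphi : is_RInt (fun u => - (h u * G (t - u))) 0 t (minus (phi t) (phi 0))).
  { apply (is_RInt_derive phi); rewrite Rmin_left, Rmax_right by lra; intros u Hu.
    - assert (Htu : 0 <= t + - u) by lra.
      unfold phi. auto_derive.
      + repeat split; eexists; [apply hh | apply he1 | apply hdh | apply hh | apply he]; lra.
      + rewrite (is_derive_unique (fun x : R => h x) u _ (hh u)),
          (is_derive_unique (fun x : R => dh x) u _ (hdh u)),
          (is_derive_unique (fun x : R => e x) _ _ (he _ Htu)),
          (is_derive_unique (fun x : R => e1 x) _ _ (he1 _ Htu)).
        change (t + - u) with (t - u). simpl. ring.
    - apply (continuous_opp (fun u => h u * G (t - u))), (continuous_mult h).
      + apply (ex_derive_continuous h). eexists. apply hh.
      + apply continuous_reflect, hG. }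
  apply is_RInt_opp in Hphi.
  unfold phi in Hphi. rewrite Rminus_eq_0, Rminus_0_r, hh0, hdh0, e0, e10 in Hphi.
  replace (opp (minus _ _)) with (e t) in Hphi by (unfold opp, minus, plus, opp; simpl; ring).
  apply (is_RInt_ext _ _ 0 t _ (fun u _ => Ropp_involutive (h u * G (t - u))) Hphi).
Qed.

Lemma abs_RInt_mult_le (f g : R -> R) (a b M : R) : a <= b ->
  (forall u, a <= u <= b -> continuous f u) -> (forall u, a <= u <= b -> continuous g u) ->
  (forall u, a <= u <= b -> Rabs (g u) <= M) ->
  Rabs (RInt (fun u => f u * g u) a b) <= M * RInt (fun u => Rabs (f u)) a b.
Proof.
  intros hab hf hg hM.
  assert (Hcont : forall (k : R -> R), (forall u, a <= u <= b -> continuous k u) ->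
    ex_RInt k a b) by (intros k hk; apply (ex_RInt_continuous k);
                       rewrite Rmin_left, Rmax_right by lra; exact hk).
  assert (Hfg : forall u, a <= u <= b -> continuous (fun u => f u * g u) u)
    by (intros u hu; apply (continuous_mult f g); auto).
  assert (Habs : forall (k : R -> R) u, continuous k u -> continuous (fun u => Rabs (k u)) u)
    by (intros k u hk; apply (continuous_comp k Rabs); [exact hk | apply continuous_Rabs]).
  assert (Hf : ex_RInt (fun u => Rabs (f u)) a b) by (apply Hcont; intros; apply Habs; auto).
  replace (M * RInt (fun u => Rabs (f u)) a b) with (RInt (fun u => M * Rabs (f u)) a b)
    by exact (RInt_scal (fun u => Rabs (f u)) a b M Hf).
  apply Rle_trans with (RInt (fun u => Rabs (f u * g u)) a b).
  - apply abs_RInt_le; [exact hab | apply Hcont, Hfg].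
  - apply RInt_le; [exact hab | apply Hcont; intros; apply Habs, Hfg; auto
                   | apply (ex_RInt_scal (fun u => Rabs (f u)) a b M Hf) |].
    intros u hu. rewrite Rabs_mult, (Rmult_comm M).
    apply Rmult_le_compat_l; [apply Rabs_pos | apply hM; lra].
Qed.

Lemma is_RInt_gen_p_infty_near (f : R -> R) (a l : R) :
  is_RInt_gen f (at_point a) (Rbar_locally p_infty) l ->
  forall eta, 0 < eta -> Rbar_locally p_infty (fun y => Rabs (RInt f a y - l) < eta).
Proof.
  intros Hf eta heta.
  destruct (Hf _ (locally_ball l (mkposreal _ heta))) as [Pa Py HPa [M HM] Hall].
  exists M. intros y hy.
  destruct (Hall a y HPa (HM y hy)) as [v [Hv Hball]].
  rewrite (is_RInt_unique f a y v Hv). exact Hball.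
Qed.

Lemma abs_convolution_split_le (h G : R -> R) (S t B Gm : R) : 0 <= S <= t ->
  (forall u, continuous h u) -> (forall y, continuous G y) ->
  (forall y, S <= y -> Rabs (G y) <= B) -> (forall y, 0 <= y -> Rabs (G y) <= Gm) ->
  Rabs (RInt (fun u => h u * G (t - u)) 0 t)
  <= B * RInt (fun u => Rabs (h u)) 0 (t - S) + Gm * RInt (fun u => Rabs (h u)) (t - S) t.
Proof.
  intros hSt hh hG hB hGm.
  assert (Hk : forall a b, ex_RInt (fun u => h u * G (t - u)) a b).
  { intros a b. apply (ex_RInt_continuous (fun u => h u * G (t - u))). intros u _.
    apply (continuous_mult h); [apply hh | apply continuous_reflect, hG]. }
  rewrite <- (RInt_Chasles (fun u => h u * G (t - u)) 0 (t - S) t (Hk _ _) (Hk _ _)).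
  eapply Rle_trans; [apply Rabs_triang |]. apply Rplus_le_compat.
  - apply (abs_RInt_mult_le h (fun u => G (t - u))); [lra | auto | |].
    + intros u _. apply continuous_reflect, hG.
    + intros u hu. apply hB. lra.
  - apply (abs_RInt_mult_le h (fun u => G (t - u))); [lra | auto | |].
    + intros u _. apply continuous_reflect, hG.
    + intros u hu. apply hGm. lra.
Qed.

Lemma convolution_limsup_le (h G : R -> R) (N B Gm : R) :
  (forall u, continuous h u) -> (forall y, continuous G y) ->
  is_RInt_gen (fun u => Rabs (h u)) (at_point 0) (Rbar_locally p_infty) N ->
  0 <= B -> (forall y, 0 <= y -> Rabs (G y) <= Gm) ->
  limsup_le (fun y => Rabs (G y)) B ->
  limsup_le (fun t => Rabs (RInt (fun u => h u * G (t - u)) 0 t)) (N * B).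
Proof.
  intros hh hG hN hB hGm hGlim.
  apply (limsup_le_of_slack _ _ (B + N + 1 + 2 * Gm)). intros eta [heta heta1].
  destruct (hGlim eta heta) as [S HS].
  destruct (is_RInt_gen_p_infty_near _ _ _ hN eta heta) as [X HX].
  (* on [0, t - S'] the kernel meets [G] near its limsup, and the remaining
     window [t - S', t] only sees the tail of [|h|] *)
  set (S' := Rmax S 0 + 1).
  assert (HS' : S < S' /\ 0 < S')
    by (unfold S'; pose proof (Rmax_l S 0); pose proof (Rmax_r S 0); lra).
  exists (Rmax X 0 + S'). intros t ht.
  pose proof (Rmax_l X 0). pose proof (Rmax_r X 0).
  assert (Hsplit := abs_convolution_split_le h G S' t (B + eta) Gm ltac:(lra) hh hG
                      (fun y hy => HS y ltac:(lra)) hGm).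
  assert (Hh : forall a b, ex_RInt (fun u => Rabs (h u)) a b).
  { intros a b. apply (ex_RInt_continuous (fun u => Rabs (h u))). intros u _.
    apply (continuous_comp h Rabs); [apply hh | apply continuous_Rabs]. }
  pose proof (RInt_Chasles (fun u => Rabs (h u)) 0 (t - S') t (Hh _ _) (Hh _ _)) as Hchasles.
  pose proof (HX (t - S') ltac:(lra)) as Hbulk. pose proof (HX t ltac:(lra)) as Hall.
  set (I1 := RInt (fun u => Rabs (h u)) 0 (t - S')) in *.
  set (I2 := RInt (fun u => Rabs (h u)) (t - S') t) in *.
  change (plus I1 I2) with (I1 + I2) in Hchasles. rewrite <- Hchasles in Hall.
  assert (HI1 : I1 <= N + eta) by (revert Hbulk; split_Rabs; lra).
  assert (HI2 : I2 <= 2 * eta) by (revert Hbulk Hall; split_Rabs; lra).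
  assert (HGm0 : 0 <= Gm) by (pose proof (hGm 0 (Rle_refl 0)); pose proof (Rabs_pos (G 0)); lra).
  assert ((B + eta) * I1 <= (B + eta) * (N + eta)) by (apply Rmult_le_compat_l; lra).
  assert (Gm * I2 <= Gm * (2 * eta)) by (apply Rmult_le_compat_l; lra).
  nra.
Qed.

Lemma cesaro_limsup_le (p : R -> R) (A : R) :
  (forall t, 0 <= t -> continuous p t) -> limsup_le p A ->
  limsup_le (fun T => / T * RInt p 0 T) A.
Proof.
  intros hp hA eps heps.
  assert (heps2 : 0 < eps / 2) by lra.
  destruct (hA _ heps2) as [T1 HT1].
  set (T2 := Rmax T1 0 + 1).
  assert (HT2 : T1 < T2 /\ 0 < T2)
    by (unfold T2; pose proof (Rmax_l T1 0); pose proof (Rmax_r T1 0); lra).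
  assert (Hex : forall a b, 0 <= a <= b -> ex_RInt p a b).
  { intros a b hab. apply (ex_RInt_continuous p).
    rewrite Rmin_left, Rmax_right by lra. intros; apply hp; lra. }
  set (C := RInt p 0 T2 - T2 * (A + eps / 2)).
  exists (T2 + 2 * Rabs C / eps). intros T HT.
  assert (HC : 0 <= 2 * Rabs C / eps) by (apply Rdiv_le_0_compat; [pose proof (Rabs_pos C) |]; lra).
  rewrite <- (RInt_Chasles p 0 T2 T (Hex 0 T2 ltac:(lra)) (Hex T2 T ltac:(lra))).
  assert (Htail : RInt p T2 T <= (T - T2) * (A + eps / 2)).
  { replace ((T - T2) * (A + eps / 2)) with (RInt (fun _ => A + eps / 2) T2 T)
      by exact (RInt_const T2 T (A + eps / 2)).
    apply RInt_le; [lra | apply Hex; lra | apply (ex_RInt_const T2 T (A + eps / 2)) |].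
    intros t ht. apply HT1. lra. }
  assert (HCT : Rabs C <= T * (eps / 2)).
  { replace (Rabs C) with (2 * Rabs C / eps * (eps / 2)) by (field; lra).
    apply Rmult_le_compat_r; lra. }
  change (plus (RInt p 0 T2) (RInt p T2 T)) with (RInt p 0 T2 + RInt p T2 T).
  apply (Rmult_le_reg_l T); [lra |].
  rewrite <- Rmult_assoc, Rinv_r, Rmult_1_l by lra.
  pose proof (Rle_abs C). unfold C in *. nra.
Qed.

Lemma is_derive_rref (cr d a b t : R) :
  is_derive (rref cr d a b) t ((b - cr * (b + cr * (a - d)) * t) * exp (- cr * t)).
Proof. unfold rref. auto_derive; [exact I | ring]. Qed.

Lemma rref_0 (cr d a b : R) : rref cr d a b 0 = a.
Proof. unfold rref. rewrite !Rmult_0_r, exp_0. ring. Qed.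

Lemma Derive_rref_0 (cr d a b : R) : Derive (rref cr d a b) 0 = b.
Proof. rewrite (is_derive_unique _ _ _ (is_derive_rref cr d a b 0)), !Rmult_0_r, exp_0. ring. Qed.

Lemma ex_derive_Derive_rref (cr d a b t : R) : ex_derive (Derive (rref cr d a b)) t.
Proof.
  apply (ex_derive_ext (fun s => (b - cr * (b + cr * (a - d)) * s) * exp (- cr * s))).
  - intros s. symmetry. apply is_derive_unique, is_derive_rref.
  - auto_derive. exact I.
Qed.

Lemma rref_limsup (cr d a b : R) : 0 < cr -> limsup_le (fun t => Rabs (rref cr d a b t - d)) 0.
Proof.
  intros hcr.
  apply (limsup_le_le _ (fun t => exp (- cr * t) * (Rabs (a - d) + Rabs (b + cr * (a - d)) * t))).
  - exists 0. intros t ht. unfold rref.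
    replace (d + (a - d) * exp (- cr * t) + (b + cr * (a - d)) * t * exp (- cr * t) - d)
      with (exp (- cr * t) * ((a - d) + (b + cr * (a - d)) * t)) by ring.
    rewrite Rabs_mult, (Rabs_pos_eq (exp _)) by (left; apply exp_pos).
    apply Rmult_le_compat_l; [left; apply exp_pos |].
    eapply Rle_trans; [apply Rabs_triang |].
    rewrite Rabs_mult, (Rabs_pos_eq t) by lra. lra.
  - apply limsup_le_exp_decay; [exact hcr | apply Rabs_pos | apply Rabs_pos].
Qed.

Lemma fhat_is_derive (wo : R) (f lam x2 xi : R -> R) (t : R) :
  is_derive x2 t (f t - lam t) ->
  is_derive xi t (- wo * xi t - wo ^ 2 * x2 t + wo * lam t) ->
  is_derive (fhat wo xi x2) t (wo * (f t - fhat wo xi x2 t)).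
Proof.
  intros hx2 hxi. unfold fhat. auto_derive.
  - repeat split; eexists; eassumption.
  - rewrite (is_derive_unique (fun s : R => xi s) t _ hxi),
      (is_derive_unique (fun s : R => x2 s) t _ hx2).
    simpl. ring.
Qed.

Lemma tracking_error_is_derive (kap kad wo : R) (f r x1 x2 xi : R -> R) (t : R) :
  ex_derive (Derive r) t -> is_derive x2 t (f t - lam kap kad wo r x1 x2 xi t) ->
  is_derive (fun s => x2 s - Derive r s) t
    (f t - fhat wo xi x2 t - kap * (x1 t - r t) - kad * (x2 t - Derive r t)).
Proof.
  intros hr hx2. auto_derive.
  - repeat split; [eexists; exact hx2 | exact hr].
  - rewrite (is_derive_unique (fun s : R => x2 s) t _ hx2),
      (is_derive_unique (fun s : R => Derive r s) t _ (Derive_correct _ _ hr)).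
    unfold lam. simpl. ring.
Qed.

Lemma pos_part_sub_le (a b c : R) : pos_part (a - c) <= Rabs (a - b) + Rabs (b - c).
Proof. unfold pos_part, Rmax. destruct (Rle_dec (a - c) 0); split_Rabs; lra. Qed.

Section ClosedLoop.

Variables (kap kad wo cr d Lf normL1 : R) (f x1 x2 xi h dh : R -> R).
Hypotheses (hwo : 0 < wo) (hcr : 0 < cr) (hLf : 0 <= Lf)
  (hf : forall s t, 0 <= s -> 0 <= t -> Rabs (f t - f s) <= Lf * Rabs (t - s))
  (hx1 : forall t, 0 <= t -> is_derive x1 t (x2 t))
  (hx2 : forall t, 0 <= t ->
     is_derive x2 t (f t - lam kap kad wo (rref cr d (x1 0) (x2 0)) x1 x2 xi t))
  (hxi : forall t, 0 <= t ->
     is_derive xi t (- wo * xi t - wo ^ 2 * x2 t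
                     + wo * lam kap kad wo (rref cr d (x1 0) (x2 0)) x1 x2 xi t))
  (hh : forall t, is_derive h t (dh t))
  (hdh : forall t, is_derive dh t (- kad * dh t - kap * h t))
  (hh0 : h 0 = 0) (hdh0 : dh 0 = 1)
  (hnorm : is_RInt_gen (fun t => Rabs (h t)) (at_point 0) (Rbar_locally p_infty) normL1).

Local Notation r := (rref cr d (x1 0) (x2 0)).
Local Notation fh := (fhat wo xi x2).
Local Notation lag := (extend_left (fun s => f s - fhat wo xi x2 s)).

Lemma fhat_closed_loop_is_derive (t : R) : 0 <= t -> is_derive fh t (wo * (f t - fh t)).
Proof. intros ht. exact (fhat_is_derive wo f _ x2 xi t (hx2 t ht) (hxi t ht)). Qed.

Lemma lag_bound (y : R) : 0 <= y -> Rabs (lag y) <= Lf / wo + exp (- wo * y) * Rabs (f 0 - fh 0).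
Proof.
  intros hy. rewrite extend_left_id by exact hy.
  exact (first_order_lag_bound wo Lf f fh hwo hLf hf fhat_closed_loop_is_derive y hy).
Qed.

Lemma lag_limsup : limsup_le (fun y => Rabs (lag y)) (Lf / wo).
Proof.
  apply (limsup_le_le _ (fun y => Lf / wo + exp (- wo * y) * (Rabs (f 0 - fh 0) + 0 * y))).
  - exists 0. intros y hy. rewrite Rmult_0_l, Rplus_0_r. apply lag_bound. lra.
  - pose proof (limsup_le_plus _ _ _ _ (limsup_le_const (Lf / wo))
      (limsup_le_exp_decay wo _ 0 hwo (Rabs_pos (f 0 - fh 0)) (Rle_refl 0))) as Hsum.
    rewrite Rplus_0_r in Hsum. exact Hsum.
Qed.

Lemma continuous_lag (y : R) : continuous lag y.
Proof.
  apply (continuous_minus (extend_left f) (extend_left fh)).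
  - exact (continuous_extend_left_Lipschitz f Lf y hLf hf).
  - apply continuous_extend_left. intros t ht.
    apply (ex_derive_continuous fh). eexists. apply fhat_closed_loop_is_derive, ht.
Qed.

Lemma tracking_error_convolution (t : R) : 0 <= t ->
  is_RInt (fun u => h u * lag (t - u)) 0 t (x1 t - r t).
Proof.
  intros ht.
  apply (is_RInt_impulse_response kap kad h dh lag (fun s => x1 s - r s)
           (fun s => x2 s - Derive r s)); auto using continuous_lag.
  - intros s hs. apply (is_derive_minus x1 r); [apply hx1, hs |].
    apply Derive_correct. eexists. apply is_derive_rref.
  - intros s hs. rewrite extend_left_id by exact hs.
    apply tracking_error_is_derive; [apply ex_derive_Derive_rref | apply hx2, hs].
  - rewrite rref_0. ring.
  - rewrite Derive_rref_0. ring.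
Qed.

Lemma tracking_error_limsup : limsup_le (fun t => Rabs (x1 t - r t)) (normL1 * (Lf / wo)).
Proof.
  apply (limsup_le_le _ (fun t => Rabs (RInt (fun u => h u * lag (t - u)) 0 t))).
  - exists 0. intros t ht.
    rewrite (is_RInt_unique _ _ _ _ (tracking_error_convolution t ltac:(lra))). lra.
  - apply (convolution_limsup_le h lag normL1 (Lf / wo) (Lf / wo + Rabs (f 0 - fh 0))).
    + intros u. apply (ex_derive_continuous h). eexists. apply hh.
    + exact continuous_lag.
    + exact hnorm.
    + apply Rdiv_le_0_compat; lra.
    + intros y hy. eapply Rle_trans; [apply lag_bound, hy |].
      assert (exp (- wo * y) <= 1).
      { rewrite <- exp_0. destruct hy as [hy | <-].
        - left. apply exp_increasing. nra.
        - rewrite Rmult_0_r. lra. }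
      pose proof (Rabs_pos (f 0 - fh 0)). nra.
    + exact lag_limsup.
Qed.

Lemma pos_part_limsup : limsup_le (fun t => pos_part (x1 t - d)) (normL1 * Lf / wo).
Proof.
  replace (normL1 * Lf / wo) with (normL1 * (Lf / wo) + 0) by (field; lra).
  apply (limsup_le_le _ (fun t => Rabs (x1 t - r t) + Rabs (r t - d))).
  - exists 0. intros t _. apply pos_part_sub_le.
  - apply limsup_le_plus; [exact tracking_error_limsup | exact (rref_limsup cr d _ _ hcr)].
Qed.

End ClosedLoop.

Theorem theoremC8
  (kap kad wo cr d Lf : R)
  (hkap : 0 < kap) (hkad : 0 < kad) (hwo : 0 < wo) (hcr : 0 < cr) (hLf : 0 <= Lf)
  (f : R -> R)
  (* f absolutely continuous on [0,oo) with |f'| <= Lf (a.e.), i.e. Lf-Lipschitz *)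
  (hf : forall s t, 0 <= s -> 0 <= t -> Rabs (f t - f s) <= Lf * Rabs (t - s))
  (x1 x2 xi : R -> R)
  (hx1 : forall t, 0 <= t -> is_derive x1 t (x2 t))
  (hx2 : forall t, 0 <= t ->
     is_derive x2 t (f t - lam kap kad wo (rref cr d (x1 0) (x2 0)) x1 x2 xi t))
  (hxi : forall t, 0 <= t ->
     is_derive xi t (- wo * xi t - wo ^ 2 * x2 t
                     + wo * lam kap kad wo (rref cr d (x1 0) (x2 0)) x1 x2 xi t))
  (* impulse response h of 1/(s^2 + kad s + kap) *)
  (h dh : R -> R)
  (hh : forall t, is_derive h t (dh t))
  (hdh : forall t, is_derive dh t (- kad * dh t - kap * h t))
  (hh0 : h 0 = 0) (hdh0 : dh 0 = 1)
  (* normL1 = ||h||_{L1} = int_0^oo |h| *)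
  (normL1 : R)
  (hnorm : is_RInt_gen (fun t => Rabs (h t)) (at_point 0) (Rbar_locally p_infty) normL1) :
  (* limsup_{T->oo} (1/T) int_0^T (x1 - d)_+ <= normL1 * Lf / wo *)
  forall eps, 0 < eps -> exists T0, 0 < T0 /\
    forall T, T0 <= T ->
      / T * RInt (fun t => pos_part (x1 t - d)) 0 T <= normL1 * Lf / wo + eps.
Proof.
  intros eps heps.
  assert (Hp : forall t, 0 <= t -> continuous (fun t => pos_part (x1 t - d)) t).
  { intros t ht. apply (continuous_comp (fun t => x1 t - d) pos_part);
      [| apply continuous_pos_part].
    apply (ex_derive_continuous (fun t => x1 t - d)).
    eexists. apply (is_derive_minus x1 (fun _ => d)); [apply hx1, ht | apply is_derive_const]. }
  pose proof (pos_part_limsup kap kad wo cr d Lf normL1 f x1 x2 xi h dh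
                hwo hcr hLf hf hx1 hx2 hxi hh hdh hh0 hdh0 hnorm) as Hpos.
  destruct (cesaro_limsup_le _ _ Hp Hpos eps heps) as [M HM].
  exists (Rmax M 0 + 1). pose proof (Rmax_l M 0). pose proof (Rmax_r M 0).
  split; [lra |]. intros T HT. apply HM. lra.
Qed.
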